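(* Fix $p\in(0,1)$ and let $\Phi_{\mathsf{Even}}=\sum_{v\in\mathsf{Even}}2^{-N_p(v)}$, $\Phi_{\mathsf{Odd}}=\sum_{v\in\mathsf{Odd}}2^{-N_p(v)}$. Then: 1. $\mathbb E[\Phi_{\mathsf{Even}}]=\mathbb E[\Phi_{\mathsf{Odd}}]=\tfrac12(2-p)^d$; 2. $\mathrm{Var}(\Phi_{\mathsf{Even}})=\mathrm{Var}(\Phi_{\mathsf{Odd}})=\tfrac12(\tfrac{4-3p}{2})^d(1-o(1))$ as $d\to\infty$; 3. $\mathrm{Cov}(\Phi_{\mathsf{Even}},\Phi_{\mathsf{Odd}})/\mathrm{Var}(\Phi_{\mathsf{Even}})$ decays exponentially in $d$.
   Context: Setup: - $Q_d=\{0,1\}^d$ is the hypercube graph. - $\mathsf{Even}$ and $\mathsf{Odd}$ are the vertices of even and odd Hamming weight. - $Q_{d,p}$ is obtained by retaining each edge independently with probability $p$. - $N_p(v)$ is the number of neighbors of $v$ in $Q_{d,p}$. *)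

From HB Require Import structures.
From mathcomp Require Import all_boot all_order all_algebra.
From mathcomp Require Import all_classical all_reals all_analysis.
Set Implicit Arguments. Unset Strict Implicit. Unset Printing Implicit Defensive.
Import Order.TTheory GRing.Theory Num.Theory.
Local Open Scope ring_scope.

Definition cube (d : nat) := {ffun 'I_d -> bool}.

Definition hweight d (v : cube d) : nat := #|[set i | v i]|.
Definition is_even d (v : cube d) : bool := ~~ odd (hweight v).

Definition flip d (v : cube d) (i : 'I_d) : cube d :=
  [ffun j => if j == i then ~~ v j else v j].

(* An edge of Q_d is encoded by its lower endpoint u and direction i, with u i = false:
   it joins u and flip u i.  The set of all edges of Q_d: *)
Definition hedges d : {set cube d * 'I_d} := [set e : cube d * 'I_d | ~~ e.1 e.2].

Definition edge_of d (v : cube d) (i : 'I_d) : cube d * 'I_d :=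
  (if v i then flip v i else v, i).

(* Outcomes of Q_{d,p}: sets of retained edges (omega \subset hedges d).
   Probability weight of an outcome: each edge kept independently with prob. p. *)
Definition pw (R : realType) (p : R) d (om : {set cube d * 'I_d}) : R :=
  if om \subset hedges d
  then p ^+ #|om| * (1 - p) ^+ (#|hedges d| - #|om|)
  else 0.

Definition Ex (R : realType) (p : R) d (X : {set cube d * 'I_d} -> R) : R :=
  \sum_(om : {set cube d * 'I_d}) pw p om * X om.

Definition Cov (R : realType) (p : R) d (X Y : {set cube d * 'I_d} -> R) : R :=
  Ex p (fun om => X om * Y om) - Ex p X * Ex p Y.

Definition Var (R : realType) (p : R) d (X : {set cube d * 'I_d} -> R) : R :=
  Cov p X X.

Definition Np d (om : {set cube d * 'I_d}) (v : cube d) : nat :=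
  #|[set i : 'I_d | edge_of v i \in om]|.

Definition PhiEven (R : realType) d (om : {set cube d * 'I_d}) : R :=
  \sum_(v : cube d | is_even v) (2 : R) ^- Np om v.
Definition PhiOdd (R : realType) d (om : {set cube d * 'I_d}) : R :=
  \sum_(v : cube d | ~~ is_even v) (2 : R) ^- Np om v.

From HB Require Import structures.
From mathcomp Require Import all_boot all_order all_algebra.
From mathcomp Require Import all_classical all_reals all_analysis.
From mathcomp Require Import ring lra.
Import Order.TTheory GRing.Theory Num.Theory numFieldNormedType.Exports.
Set Implicit Arguments. Unset Strict Implicit. Unset Printing Implicit Defensive.
Local Open Scope ring_scope.

(* Write 2^-N_p(v) as the product, over the retained edges e, of 1/2 if e is
   incident to v and 1 otherwise.  Edges being independent, expectations of such
   products factorise edge by edge: E[2^-N(v)] = phi^d and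
   E[2^-N(u) 2^-N(v)] = beta^k phi^(2(d-k)), where phi = 1 - p/2, beta = 1 - 3p/4
   and k is the number of edges incident to both u and v (d if u = v, 1 if u and v
   are adjacent, 0 otherwise).  Vertices of equal parity are never adjacent, so
   Var(Phi_Even) = 2^(d-1) (beta^d - phi^(2d)); every even vertex has d odd
   neighbours, so Cov(Phi_Even, Phi_Odd) = 2^(d-1) d (beta phi^(2d-2) - phi^(2d)).
   As phi^2 < beta, the variance is asymptotic to 2^(d-1) beta^d, and
   Cov/Var <= d rho^(d-1) with rho = phi^2/beta < 1. *)

Lemma sum_subset_weight_prod (R : comRingType) (T : finType) (H : {set T})
    (p : R) (g : T -> R) :
  \sum_(om : {set T})
     (if om \subset H then p ^+ #|om| * (1 - p) ^+ (#|H| - #|om|) else 0)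
     * \prod_(e in om) g e
  = \prod_(e in H) (p * g e + (1 - p)).
Proof.
(* Both sides expand \prod_e \sum_b G e b, the terms being indexed by the set
   of e with b = true. *)
pose G e (b : bool) := if e \in H then (if b then p * g e else 1 - p)
                       else (if b then 0 else 1).
have weightE (om : {set T}) : \prod_e G e (e \in om) =
    (if om \subset H then p ^+ #|om| * (1 - p) ^+ (#|H| - #|om|) else 0)
    * \prod_(e in om) g e.
  rewrite (bigID (mem om)) /=.
  under eq_bigr => e -> do [].
  under [X in _ * X]eq_bigr => e /negbTE -> do [].
  case: (boolP (om \subset H)) => [omH|]; last first.
    by case/fintype.subsetPn => e eom /negbTE eH; rewrite (bigD1 e) //= /G eH !mul0r.
  rewrite [X in X * _](eq_bigr (fun e => p * g e)); last first.
    by move=> e /(fintype.subsetP omH); rewrite /G => ->.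
  rewrite -big_mkcondr /= [X in _ * X](eq_bigl (mem (H :\: om))); last first.
    by move=> e; rewrite !inE andbC.
  rewrite big_split /= !prodr_const cardsD (finset.setIidPr omH).
  by rewrite mulrAC mulrC !mulrA.
have factorE : \prod_(e in H) (p * g e + (1 - p)) = \prod_e \sum_b G e b.
  rewrite big_mkcond /=; apply: eq_bigr => e _.
  by rewrite big_bool /G /=; case: (e \in H); rewrite ?add0r.
rewrite factorE bigA_distr_bigA /= -(eq_bigr _ (fun om _ => weightE om)).
rewrite (reindex (fun f : {ffun T -> bool} => [set e | f e])) /=.
  by apply: eq_bigr => f _; apply: eq_bigr => e _; rewrite inE.
exists (fun A : {set T} => [ffun e => e \in A]) => [f _|A _].
  by apply/ffunP => e; rewrite ffunE inE.
by apply/finset.setP => e; rewrite inE ffunE.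
Qed.

Lemma prod_indicator (R : comRingType) (T : finType) (H S : {set T}) (c : R) :
  S \subset H -> \prod_(e in H) (if e \in S then c else 1) = c ^+ #|S|.
Proof.
move=> SH; rewrite -big_mkcondr /= -prodr_const; apply: eq_bigl => e.
by rewrite andb_idl // => /(fintype.subsetP SH).
Qed.

Section HypercubeEdges.
Variable d : nat.
Implicit Types (u v : cube d) (i : 'I_d).

Definition incident v : {set cube d * 'I_d} := edge_of v @: [set: 'I_d].

Lemma edge_of_inj v : injective (edge_of v).
Proof. by move=> i j /(congr1 snd). Qed.

Lemma edge_ofE v i : edge_of v i = ([ffun j => (j != i) && v j], i).
Proof.
congr pair; apply/ffunP => j; rewrite ffunE; case: (eqVneq j i) => [->|ji] /=.
  by case vi: (v i) => //; rewrite /flip ffunE eqxx vi.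
by case: (v i) => //; rewrite /flip ffunE (negbTE ji).
Qed.

Lemma flipK i : involutive (fun v => flip v i).
Proof.
by move=> v; apply/ffunP => j; rewrite !ffunE; case: eqVneq; rewrite ?negbK.
Qed.

Lemma edge_of_flip v i : edge_of (flip v i) i = edge_of v i.
Proof.
rewrite !edge_ofE; congr pair; apply/ffunP => j; rewrite !ffunE.
by case: eqVneq => //= ji; rewrite ffunE (negbTE ji).
Qed.

Lemma edge_of_eq_flip u v i : edge_of u i = edge_of v i -> v = u \/ v = flip u i.
Proof.
rewrite !edge_ofE => -[/ffunP uv].
have off_i j : j != i -> v j = u j by move=> ji; have := uv j; rewrite !ffunE ji.
have [vi|vi] := eqVneq (v i) (u i); [left|right]; apply/ffunP => j; rewrite ?ffunE.
  by case: (eqVneq j i) => [->|/off_i].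
by case: (eqVneq j i) => [->|/off_i //]; move: vi; case: (v i); case: (u i).
Qed.

Lemma incident_sub_hedges v : incident v \subset hedges d.
Proof.
by apply/fintype.subsetP => _ /imsetP [i _ ->]; rewrite inE edge_ofE ffunE eqxx.
Qed.

Lemma card_incident v : #|incident v| = d.
Proof. by rewrite card_imset ?cardsT ?card_ord //; exact: edge_of_inj. Qed.

Lemma Np_incident om v : Np om v = #|om :&: incident v|.
Proof.
suff -> : om :&: incident v = edge_of v @: [set i | edge_of v i \in om].
  by rewrite card_imset //; exact: edge_of_inj.
apply/finset.setP => e; rewrite inE; apply/andP/imsetP => [[eom /imsetP [i _ ei]]|[i]].
  by exists i; rewrite ?inE -?ei.
by rewrite inE => iom ->; split => //; apply: imset_f.
Qed.

Lemma card_incident_meet u v :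
  v != u -> #|incident u :&: incident v| = #|[set i | v == flip u i]|.
Proof.
move=> vu; suff -> : incident u :&: incident v = edge_of u @: [set i | v == flip u i].
  by rewrite card_imset //; exact: edge_of_inj.
apply/finset.setP => e; rewrite inE.
apply/andP/imsetP => [[/imsetP [i _ ->] /imsetP [j _ uv]]|[i]].
  have ji : j = i by case: uv.
  rewrite ji in uv; exists i => //; rewrite inE.
  by case: (edge_of_eq_flip uv) => [/eqP|->]; rewrite ?(negbTE vu) ?eqxx.
by rewrite inE => /eqP -> ->; split; [|rewrite -edge_of_flip]; apply: imset_f.
Qed.

Lemma sum_card_flip_eq u (P : pred (cube d)) :
  (\sum_(v | P v) #|[set i | v == flip u i]| = #|[set i | P (flip u i)]|)%N.
Proof.
rewrite -sum1_card (eq_bigr (fun v => \sum_i (v == flip u i) : nat)); last first.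
  by move=> v _; rewrite -sum1_card big_mkcond; apply: eq_bigr => i _; rewrite inE.
rewrite exchange_big [RHS]big_mkcond /=; apply: eq_bigr => i _; rewrite inE.
rewrite big_mkcond (bigD1 (flip u i)) //= eqxx big1 ?addn0 => [|v /negbTE ->].
  by case: (P _).
by case: (P v).
Qed.

Lemma card_flip_eq_le1 u v : (#|[set i | v == flip u i]| <= 1)%N.
Proof.
apply/card_le1_eqP => i j; rewrite !inE => /eqP -> /eqP /(congr1 (fun w : cube d => w i)).
by rewrite !ffunE eqxx; case: (eqVneq i j) => // _; case: (u i).
Qed.

Lemma is_even_flip v i : is_even (flip v i) = ~~ is_even v.
Proof.
rewrite /is_even /hweight (cardsD1 i [set j | flip v i j]) (cardsD1 i [set j | v j]).
have -> : [set j | flip v i j] :\ i = [set j | v j] :\ i.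
  by apply/finset.setP => j; rewrite !inE ffunE; case: eqVneq.
by rewrite !inE ffunE eqxx !oddD !oddb; case: (v i); case: (odd _).
Qed.

Lemma card_odd_eq_even : (0 < d)%N -> #|predC (@is_even d)| = #|@is_even d|.
Proof.
move=> d_gt0; pose i0 := Ordinal d_gt0.
rewrite -(fintype.card_image (can_inj (flipK i0)) (@is_even d)).
apply: eq_card => v; rewrite !inE; apply/idP/fintype.imageP => [odd_v|[w even_w ->]].
  by exists (flip v i0); rewrite ?flipK // -[_ \in _]/(is_even _) is_even_flip.
by rewrite is_even_flip negbK.
Qed.

Lemma card_even : (0 < d)%N -> #|@is_even d| = (2 ^ d.-1)%N.
Proof.
move=> d_gt0; have := cardC (@is_even d).
rewrite card_odd_eq_even // card_ffun card_bool card_ord addnn.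
by case: d d_gt0 => // n _; rewrite expnS mul2n => /double_inj.
Qed.

End HypercubeEdges.

Lemma pow_ratio_bound (R : realFieldType) (a b : R) n : 0 < a -> a < b ->
  0 <= a ^+ n * (b - a) / (b ^+ n.+1 - a ^+ n.+1) <= (a / b) ^+ n.
Proof.
move=> a_gt0 ab; have b_gt0 : 0 < b by apply: lt_trans ab.
have den_gt0 : 0 < b ^+ n.+1 - a ^+ n.+1 by rewrite subr_gt0 ltrXn2r ?ltW.
have an_le_bn : a ^+ n <= b ^+ n by rewrite lerXn2r ?nnegrE ?ltW.
have den_ge : b ^+ n * (b - a) <= b ^+ n.+1 - a ^+ n.+1 by rewrite !exprS; nra.
apply/andP; split.
  apply: divr_ge0 (ltW den_gt0); apply: mulr_ge0.
    exact: exprn_ge0 (ltW a_gt0).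
  by rewrite subr_ge0 ltW.
have an_E : a ^+ n = (a / b) ^+ n * b ^+ n.
  by rewrite expr_div_n divfK // expf_neq0 // gt_eqF.
rewrite ler_pdivrMr // {1}an_E -mulrA; apply: ler_wpM2l den_ge.
exact: exprn_ge0 (divr_ge0 (ltW a_gt0) (ltW b_gt0)).
Qed.

Lemma natr_mul_expr_le (R : realFieldType) (s : R) n : 0 <= s -> s < 1 ->
  n.+1%:R * s ^+ n <= (1 - s)^-1.
Proof.
move=> s_ge0 s_lt1.
have geomE : (1 - s) * \sum_(i < n.+1) s ^+ i = 1 - s ^+ n.+1.
  by rewrite -(opprB s 1) mulNr -subrX1 opprB.
have le_geom : n.+1%:R * s ^+ n <= \sum_(i < n.+1) s ^+ i.
  have <- : \sum_(i < n.+1) s ^+ n = n.+1%:R * s ^+ n.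
    by rewrite sumr_const card_ord mulr_natl.
  apply: ler_sum => i _.
  by apply: ler_wiXn2l; rewrite ?(ltW s_lt1) // -ltnS.
rewrite (le_trans le_geom) // -[X in _ <= X]mulr1 ler_pdivlMl ?subr_gt0 // geomE.
by rewrite gerBl exprn_ge0.
Qed.

Lemma natr_mul_expr_decay (R : realFieldType) (r : R) : 0 <= r -> r < 1 ->
  exists C q : R, [/\ 0 < q, q < 1 & forall n, n.+1%:R * r ^+ n <= C * q ^+ n.+1].
Proof.
move=> r_ge0 r_lt1; pose q := (1 + r) / 2; pose s := r / q.
have q_gt0 : 0 < q by rewrite /q; lra.
have q_lt1 : q < 1 by rewrite /q; lra.
have s_ge0 : 0 <= s := divr_ge0 r_ge0 (ltW q_gt0).
have s_lt1 : s < 1 by rewrite ltr_pdivrMr // mul1r /q; lra.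
exists ((1 - s)^-1 / q), q; split=> // n.
rewrite -[r](@divfK _ q) ?gt_eqF // -/s exprMn mulrA exprSr mulrA -[_ / q * _]mulrAC.
rewrite divfK ?gt_eqF //; apply: ler_wpM2r; first exact: exprn_ge0 (ltW q_gt0).
exact: natr_mul_expr_le.
Qed.

Section RandomSubgraph.
Variables (R : realType) (p : R).

Definition bern_pgf (c : R) : R := p * c + (1 - p).

Local Notation phi := (bern_pgf 2^-1).
Local Notation beta := (bern_pgf (2^-1 * 2^-1)).

Lemma Ex_prod d (g : cube d * 'I_d -> R) :
  Ex p (fun om => \prod_(e in om) g e) = \prod_(e in hedges d) bern_pgf (g e).
Proof. exact: sum_subset_weight_prod. Qed.

Lemma Ex_sum d (I : finType) (P : pred I) (X : I -> {set cube d * 'I_d} -> R) :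
  Ex p (fun om => \sum_(i | P i) X i om) = \sum_(i | P i) Ex p (X i).
Proof. by rewrite /Ex; under eq_bigr do rewrite mulr_sumr; exact: exchange_big. Qed.

Lemma Cov_sum d (I J : finType) (P : pred I) (Q : pred J)
    (X : I -> {set cube d * 'I_d} -> R) (Y : J -> {set cube d * 'I_d} -> R) :
  Cov p (fun om => \sum_(i | P i) X i om) (fun om => \sum_(j | Q j) Y j om) =
  \sum_(i | P i) \sum_(j | Q j) Cov p (X i) (Y j).
Proof.
rewrite /Cov.
have -> : (fun om => (\sum_(i | P i) X i om) * \sum_(j | Q j) Y j om) =
          (fun om => \sum_(i | P i) \sum_(j | Q j) X i om * Y j om).
  by apply: funext => om; rewrite mulr_suml; under eq_bigr do rewrite mulr_sumr.
rewrite !Ex_sum mulr_suml -sumrB; apply: eq_bigr => i _.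
by rewrite Ex_sum mulr_sumr -sumrB.
Qed.

Definition half_weight d (S om : {set cube d * 'I_d}) : R :=
  \prod_(e in om) (if e \in S then 2^-1 else 1).

Lemma exp2N_Np d om (v : cube d) : 2 ^- Np om v = half_weight (incident v) om.
Proof.
rewrite Np_incident /half_weight -big_mkcondr -exprVn -prodr_const.
by apply: eq_bigl => e; rewrite inE.
Qed.

Lemma Ex_half_weightM d (U V : {set cube d * 'I_d}) :
  U \subset hedges d -> V \subset hedges d ->
  Ex p (fun om => half_weight U om * half_weight V om) =
  beta ^+ #|U :&: V| * phi ^+ #|U :\: V| * phi ^+ #|V :\: U|.
Proof.
move=> UH VH; under eq_fun do rewrite /half_weight -big_split /=; rewrite Ex_prod.
rewrite -(prod_indicator _ (fintype.subset_trans (finset.subsetIl U V) UH)).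
rewrite -(prod_indicator _ (fintype.subset_trans (finset.subsetDl U V) UH)).
rewrite -(prod_indicator _ (fintype.subset_trans (finset.subsetDl V U) VH)).
rewrite -!big_split; apply: eq_bigr => e _ /=; rewrite !inE.
by case: (e \in U); case: (e \in V); rewrite /bern_pgf /= ?mulr1 ?mul1r // addrC subrK.
Qed.

Lemma Ex_half_weight d (U : {set cube d * 'I_d}) :
  U \subset hedges d -> Ex p (half_weight U) = phi ^+ #|U|.
Proof.
move=> UH; have w0 om : half_weight finset.set0 om = 1.
  by rewrite /half_weight big1 // => e _; rewrite finset.in_set0.
have -> : half_weight U = fun om => half_weight U om * half_weight finset.set0 om.
  by apply: funext => om; rewrite w0 mulr1.
rewrite Ex_half_weightM ?finset.sub0set //.
by rewrite finset.setI0 finset.setD0 finset.set0D !cards0 !expr0 mul1r mulr1.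
Qed.

Lemma Cov_half_weight_incident d (u v : cube d) (k := #|incident u :&: incident v|) :
  Cov p (half_weight (incident u)) (half_weight (incident v)) =
  beta ^+ k * phi ^+ (d - k) * phi ^+ (d - k) - phi ^+ d * phi ^+ d.
Proof.
rewrite /Cov Ex_half_weightM ?incident_sub_hedges // !Ex_half_weight ?incident_sub_hedges //.
by rewrite !cardsD !card_incident [incident v :&: _]finset.setIC.
Qed.

Definition Phi d (P : pred (cube d)) om : R :=
  \sum_(v | P v) half_weight (incident v) om.

Lemma PhiEvenE d : @PhiEven R d = Phi (@is_even d).
Proof. by apply: funext => om; apply: eq_bigr => v _; rewrite exp2N_Np. Qed.

Lemma PhiOddE d : @PhiOdd R d = Phi (predC (@is_even d)).
Proof. by apply: funext => om; apply: eq_bigr => v _; rewrite exp2N_Np. Qed.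

Lemma Ex_Phi d (P : pred (cube d)) : Ex p (Phi P) = #|P|%:R * phi ^+ d.
Proof.
rewrite /Phi Ex_sum (eq_bigr (fun=> phi ^+ d)) => [|v _].
  by rewrite sumr_const mulr_natl.
by rewrite Ex_half_weight ?incident_sub_hedges ?card_incident.
Qed.

Lemma Var_Phi_indep d (P : pred (cube d)) :
  (forall v i, P v -> ~~ P (flip v i)) ->
  Var p (Phi P) = #|P|%:R * (beta ^+ d - phi ^+ d * phi ^+ d).
Proof.
move=> P_indep; rewrite /Var /Phi Cov_sum.
rewrite (eq_bigr (fun=> beta ^+ d - phi ^+ d * phi ^+ d)) => [|u Pu].
  by rewrite sumr_const mulr_natl.
rewrite (bigD1 u) //= big1 ?addr0 => [|v /andP [Pv vu]].
  by rewrite Cov_half_weight_incident finset.setIid card_incident subnn !expr0 !mulr1.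
rewrite Cov_half_weight_incident card_incident_meet //.
suff -> : [set i | v == flip u i] = finset.set0.
  by rewrite cards0 subn0 expr0 mul1r subrr.
apply/finset.setP => i; rewrite !inE.
by apply: contraNF (P_indep u i Pu) => /eqP <-.
Qed.

Lemma Cov_Phi_predC d (P : pred (cube d)) :
  (forall v i, P (flip v i) = ~~ P v) ->
  Cov p (Phi P) (Phi (predC P)) =
  #|P|%:R * (d%:R * (beta * phi ^+ d.-1 * phi ^+ d.-1 - phi ^+ d * phi ^+ d)).
Proof.
move=> P_flip; rewrite /Phi Cov_sum; set c := _ - _.
rewrite (eq_bigr (fun=> d%:R * c)) => [|u Pu].
  by rewrite sumr_const [RHS]mulr_natl.
rewrite (eq_bigr (fun v => #|[set i | v == flip u i]|%:R * c)) => [|v nPv].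
  rewrite -mulr_suml -natr_sum sum_card_flip_eq.
  rewrite (eq_card (B := [set: 'I_d])) ?cardsT ?card_ord // => i.
  by rewrite !inE /= P_flip Pu.
have vu : v != u by apply: contraNneq nPv => ->; rewrite /= Pu.
rewrite Cov_half_weight_incident card_incident_meet //.
have := card_flip_eq_le1 u v; case: #|_| => [_|[_|//]].
  by rewrite subn0 !expr0 mul1r subrr mul0r.
by rewrite expr1 subn1 mul1r.
Qed.

Lemma Var_PhiEven d :
  Var p (@PhiEven R d) = #|@is_even d|%:R * (beta ^+ d - phi ^+ d * phi ^+ d).
Proof.
by rewrite PhiEvenE Var_Phi_indep // => v i even_v; rewrite is_even_flip even_v.
Qed.

Lemma Var_PhiOdd d :
  Var p (@PhiOdd R d) = #|predC (@is_even d)|%:R * (beta ^+ d - phi ^+ d * phi ^+ d).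
Proof. by rewrite PhiOddE Var_Phi_indep // => v i /=; rewrite is_even_flip negbK. Qed.

Lemma natr_card_even d : (0 < d)%N -> #|@is_even d|%:R = 2^-1 * 2 ^+ d :> R.
Proof.
move=> d_gt0; rewrite card_even // natrX.
by case: d d_gt0 => // n _; rewrite exprS mulrA mulVf ?mul1r.
Qed.

Lemma Ex_PhiEven d : (0 < d)%N -> Ex p (@PhiEven R d) = 2^-1 * (2 - p) ^+ d.
Proof.
move=> d_gt0; rewrite PhiEvenE Ex_Phi natr_card_even // -mulrA -exprMn.
by congr (_ * _ ^+ _); rewrite /bern_pgf; field.
Qed.

Lemma Ex_PhiOdd d : (0 < d)%N -> Ex p (@PhiOdd R d) = 2^-1 * (2 - p) ^+ d.
Proof.
by move=> d_gt0; rewrite PhiOddE Ex_Phi card_odd_eq_even // -Ex_Phi -PhiEvenE Ex_PhiEven.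
Qed.

Hypotheses (p_gt0 : 0 < p) (p_lt1 : p < 1).

Local Notation rho := (phi * phi / beta).

Lemma bern_pgf_gt0 c : 0 < c -> 0 < bern_pgf c.
Proof. by move=> c_gt0; rewrite addr_gt0 ?mulr_gt0 ?subr_gt0. Qed.

Lemma phi_gt0 : 0 < phi. Proof. by rewrite bern_pgf_gt0. Qed.

Lemma beta_gt0 : 0 < beta. Proof. by rewrite bern_pgf_gt0. Qed.

Lemma phi_sqr_lt_beta : phi * phi < beta.
Proof.
have -> : beta = phi * phi + p * (1 - p) / 4 by rewrite /bern_pgf; field.
by rewrite ltrDl divr_gt0 ?mulr_gt0 ?subr_gt0.
Qed.

Lemma rho_ge0 : 0 <= rho.
Proof. by rewrite divr_ge0 ?mulr_ge0 ?ltW ?phi_gt0 ?beta_gt0. Qed.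

Lemma rho_lt1 : rho < 1.
Proof. by rewrite ltr_pdivrMr ?mul1r ?phi_sqr_lt_beta ?beta_gt0. Qed.

Lemma Var_PhiEven_normalized d :
  Var p (@PhiEven R d) / (2^-1 * ((4 - 3 * p) / 2) ^+ d) = 1 - rho ^+ d.
Proof.
case: d => [|n]; first by rewrite Var_PhiEven !expr0 !mulr1 !subrr mulr0 mul0r.
have -> : (4 - 3 * p) / 2 = 2 * beta by rewrite /bern_pgf; field.
rewrite Var_PhiEven natr_card_even // !exprMn exprVn; field.
by rewrite !expf_neq0 // gt_eqF // beta_gt0.
Qed.

Local Open Scope classical_set_scope.

Lemma Var_PhiEven_normalized_cvg :
  Var p (@PhiEven R d) / (2^-1 * ((4 - 3 * p) / 2) ^+ d) @[d --> \oo] --> (1 : R).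
Proof.
have norm_rho_lt1 : `|rho| < 1 by rewrite ger0_norm ?rho_ge0 ?rho_lt1.
rewrite (eq_cvg _ _ Var_PhiEven_normalized).
by have := cvgB (cvg_cst (1 : R)) (cvg_expr norm_rho_lt1); rewrite subr0; apply; exact: _.
Qed.

Lemma Cov_Var_PhiEven_le n :
  `|Cov p (@PhiEven R n.+1) (@PhiOdd R n.+1) / Var p (@PhiEven R n.+1)|
    <= n.+1%:R * rho ^+ n.
Proof.
have a_gt0 : 0 < phi * phi by rewrite mulr_gt0 ?phi_gt0.
have [ratio_ge0 ratio_le] := andP (pow_ratio_bound n a_gt0 phi_sqr_lt_beta).
have den_neq0 : beta ^+ n.+1 - (phi * phi) ^+ n.+1 != 0.
  by rewrite subr_eq0 gt_eqF // ltrXn2r ?phi_sqr_lt_beta ?ltW.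
have even_neq0 : #|@is_even n.+1|%:R != 0 :> R by rewrite natr_card_even.
rewrite PhiEvenE PhiOddE Cov_Phi_predC => [|v i]; last exact: is_even_flip.
rewrite -PhiEvenE Var_PhiEven -mulf_div divff // mul1r -mulrA.
rewrite /= -!exprMn (_ : beta * _ - _ = (phi * phi) ^+ n * (beta - phi * phi)).
  rewrite -(mulrA n.+1%:R) ger0_norm ?(mulr_ge0 (ler0n _ _) ratio_ge0) //.
  by rewrite ler_pM2l ?ltr0Sn.
by rewrite exprSr mulrBr [beta * _]mulrC.
Qed.

Lemma Cov_Var_PhiEven_decay : exists C q : R, 0 < q /\ q < 1 /\ forall d, (0 < d)%N ->
  `|Cov p (@PhiEven R d) (@PhiOdd R d) / Var p (@PhiEven R d)| <= C * q ^+ d.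
Proof.
have [C [q [q_gt0 q_lt1 decay]]] := natr_mul_expr_decay rho_ge0 rho_lt1.
by exists C, q; do 2!split=> //; case=> // n _; rewrite (le_trans (Cov_Var_PhiEven_le n)).
Qed.

End RandomSubgraph.

Local Open Scope classical_set_scope.

Theorem lemma3p4 (R : realType) (p : R) (hp0 : 0 < p) (hp1 : p < 1) :
  (* 1. expectations *)
  (forall d : nat, (0 < d)%N ->
     Ex p (@PhiEven R d) = 2^-1 * (2 - p) ^+ d /\
     Ex p (@PhiOdd R d) = 2^-1 * (2 - p) ^+ d) /\
  (* 2. variances *)
  (forall d : nat, (0 < d)%N -> Var p (@PhiEven R d) = Var p (@PhiOdd R d)) /\
  (Var p (@PhiEven R d) / (2^-1 * ((4 - 3 * p) / 2) ^+ d)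
     @[d --> \oo] --> (1 : R)) /\
  (* 3. exponential decay of Cov / Var *)
  (exists (C q : R), 0 < q /\ q < 1 /\
     forall d : nat, (0 < d)%N ->
       `| Cov p (@PhiEven R d) (@PhiOdd R d) / Var p (@PhiEven R d) | <= C * q ^+ d).
Proof.
split; first by move=> d d_gt0; rewrite Ex_PhiEven // Ex_PhiOdd.
split; first by move=> d d_gt0; rewrite Var_PhiEven Var_PhiOdd card_odd_eq_even.
split; first exact: Var_PhiEven_normalized_cvg.
exact: Cov_Var_PhiEven_decay.
Qed.
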